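(* Let $1\le m_1\le m$ and $0<e_0\le1$. For the problem $P_m, e_{i\le m_1,k}\ge e_0\mid\mid C_{\max}$, the LS-ECT schedule (for any list order) satisfies $$\frac{C_{\max}(\text{LS-ECT})}{C^*_{\max}}\le 1+\frac{1}{e_0}\left(\left\lfloor\frac{m-1}{m_1}\right\rfloor+1\right),$$ where $C^*_{\max}$ is the optimal makespan.
   Context: Shared-processing parallel machine scheduling: $m$ identical machines $M_1,\dots,M_m$, $n$ primary jobs available at time $0$ with processing times $p_j>0$, each processed without interruption on one machine, jobs on a machine processed one after another. The time axis of machine $M_i$ is partitioned into consecutive intervals $(0,t_{i,1}],(t_{i,1},t_{i,2}],\dots$ with sharing ratios $e_{i,k}\in(0,1]$; during the $k$-th interval $M_i$ processes primary work at rate $e_{i,k}$. In $P_m, e_{i\le m_1,k}\ge e_0\mid\mid C_{\max}$ all sharing ratios on machines $M_1,\dots,M_{m_1}$ are at least $e_0$, the ratios on the other machines are arbitrary in $(0,1]$, and the goal is to minimize the makespan $C_{\max}=\max_j C_j$. LS-ECT: given an ordered list of jobs, the jobs are scheduled one by one in list order; each job is appended after the jobs already assigned to some machine, choosing the machine on which it would complete earliest. *)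

From Stdlib Require Import Reals List Permutation Arith.
From Coquelicot Require Import Coquelicot.
Import ListNotations.
Open Scope R_scope.

(* A sharing profile of a machine: the rate function r on the time axis is
   piecewise constant: there are breakpoints 0 = t 0 < t 1 < t 2 < ...
   (unbounded, so the intervals (t k, t (k+1)] partition (0, +oo)) and
   ratios e k in (0,1] with r s = e k for s in (t k, t (k+1)]. *)
Definition sharing_profile (r : R -> R) : Prop :=
  exists (t e : nat -> R),
    t O = 0 /\
    (forall k, t k < t (S k)) /\
    (forall T, exists k, T <= t k) /\
    (forall k, 0 < e k <= 1) /\
    (forall k s, t k < s <= t (S k) -> r s = e k).

(* A job with processing time p, started at time st on a machine with rate
   profile r, completes at time c: the primary work done in [st, c] is p. *)
Definition runs (r : R -> R) (st c p : R) : Prop :=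
  st <= c /\ RInt r st c = p.

Definition makespan (n : nat) (C : nat -> R) : R :=
  fold_right Rmax 0 (map C (seq 0 n)).

Definition feasible (m n : nat) (r : nat -> R -> R) (p : nat -> R)
    (assign : nat -> nat) (S C : nat -> R) : Prop :=
  (forall j, (j < n)%nat ->
     (assign j < m)%nat /\ 0 <= S j /\ runs (r (assign j)) (S j) (C j) (p j)) /\
  (forall j j', (j < n)%nat -> (j' < n)%nat -> j <> j' ->
     assign j = assign j' -> C j <= S j' \/ C j' <= S j).

Definition mfinish (assign : nat -> nat) (C : nat -> R) (done_ : list nat)
    (i : nat) : R :=
  fold_right Rmax 0 (map C (filter (fun j => Nat.eqb (assign j) i) done_)).

(* (assign, S, C) is a schedule produced by LS-ECT on the list [ord]
   (with arbitrary tie-breaking): the k-th job of the list is appended after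
   the jobs already assigned to some machine, namely one on which it would
   complete earliest. *)
Definition ls_ect (m : nat) (r : nat -> R -> R) (p : nat -> R)
    (ord : list nat) (assign : nat -> nat) (S C : nat -> R) : Prop :=
  forall k, (k < length ord)%nat ->
    let j := nth k ord O in
    let done_ := firstn k ord in
    (assign j < m)%nat /\
    S j = mfinish assign C done_ (assign j) /\
    runs (r (assign j)) (S j) (C j) (p j) /\
    (forall i c', (i < m)%nat ->
       runs (r i) (mfinish assign C done_ i) c' (p j) -> C j <= c').

From Stdlib Require Import Reals List Permutation Arith Lra Lia.
From Coquelicot Require Import Coquelicot.
Import ListNotations.
Open Scope R_scope.

(* Let T be the optimal makespan: every processing time is at most T, and the
   total work is at most the sum over machines of the capacities ∫_0^T r_i.
   When LS-ECT appends a job j, let F_i be the finish times of the good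
   machines i < m1. Since their rate is at least e0, earliest completion gives
   e0 C_j <= e0 F_i + p_j for every good i. If some F_i <= T this is at most
   (e0 + 1) T. Otherwise, as LS-ECT never idles, each good machine has already
   processed at least its capacity plus e0 (F_i - T), while the other m - m1
   machines have capacity at most T each; comparing with the total work and
   averaging over the good machines yields m1 e0 C_j <= m1 e0 T + (m - 1) T,
   and m <= m1 (floor((m - 1) / m1) + 1). *)

Fixpoint sumR (l : list nat) (f : nat -> R) : R :=
  match l with [] => 0 | j :: l' => f j + sumR l' f end.

Lemma sumR_app l1 l2 f : sumR (l1 ++ l2) f = sumR l1 f + sumR l2 f.
Proof. induction l1 as [|x l1 IH]; simpl; [lra|]. rewrite IH; lra. Qed.

Lemma sumR_ext l f g : (forall j, In j l -> f j = g j) -> sumR l f = sumR l g.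
Proof.
  induction l as [|x l IH]; intros Hfg; simpl; [reflexivity|].
  rewrite (Hfg x (or_introl eq_refl)), IH; [reflexivity|].
  intros j Hj. apply Hfg. right. exact Hj.
Qed.

Lemma sumR_const l c : sumR l (fun _ => c) = INR (length l) * c.
Proof.
  induction l as [|x l IH]; simpl sumR; simpl length; [simpl; lra|].
  rewrite IH, S_INR. lra.
Qed.

Lemma sumR_le l f g : (forall j, In j l -> f j <= g j) -> sumR l f <= sumR l g.
Proof.
  induction l as [|x l IH]; intros Hfg; simpl; [lra|].
  pose proof (Hfg x (or_introl eq_refl)).
  assert (sumR l f <= sumR l g) by (apply IH; intros; apply Hfg; simpl; auto).
  lra.
Qed.

Lemma sumR_nonneg l f : (forall j, In j l -> 0 <= f j) -> 0 <= sumR l f.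
Proof.
  intros Hf. pose proof (sumR_le l (fun _ => 0) f Hf) as Hle.
  rewrite sumR_const in Hle. lra.
Qed.

Lemma sumR_plus l f g : sumR l (fun j => f j + g j) = sumR l f + sumR l g.
Proof. induction l as [|x l IH]; simpl; [lra|]. rewrite IH; lra. Qed.

Lemma sumR_perm l l' f : Permutation l l' -> sumR l f = sumR l' f.
Proof. intros Hperm; induction Hperm; simpl; lra. Qed.

Lemma sumR_filter_le (P : nat -> bool) l f :
  (forall j, In j l -> 0 <= f j) -> sumR (filter P l) f <= sumR l f.
Proof.
  induction l as [|x l IH]; intros Hf; simpl; [lra|].
  pose proof (Hf x (or_introl eq_refl)).
  assert (sumR (filter P l) f <= sumR l f) by (apply IH; intros; apply Hf; simpl; auto).
  destruct (P x); simpl; lra.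
Qed.

Lemma sumR_firstn_le k l f :
  (forall j, In j l -> 0 <= f j) -> sumR (firstn k l) f <= sumR l f.
Proof.
  intros Hf. rewrite <- (firstn_skipn k l) at 2. rewrite sumR_app.
  assert (0 <= sumR (skipn k l) f); [|lra].
  apply sumR_nonneg. intros j Hj. apply Hf.
  rewrite <- (firstn_skipn k l). apply in_or_app; right; exact Hj.
Qed.

Lemma sumR_indicator a v m :
  sumR (seq 0 m) (fun i => if Nat.eqb a i then v else 0) = if Nat.ltb a m then v else 0.
Proof.
  induction m as [|m IH]; [simpl; destruct (Nat.ltb a 0); reflexivity|].
  rewrite seq_S, sumR_app, IH. simpl.
  destruct (Nat.ltb_spec a m), (Nat.eqb_spec a m), (Nat.ltb_spec a (S m)); lra || lia.
Qed.

Lemma sumR_by_machine (asg : nat -> nat) m l f :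
  sumR (seq 0 m) (fun i => sumR (filter (fun j => Nat.eqb (asg j) i) l) f) =
  sumR (filter (fun j => Nat.ltb (asg j) m) l) f.
Proof.
  induction l as [|x l IH]; simpl.
  - rewrite sumR_const. lra.
  - transitivity (sumR (seq 0 m) (fun i => (if Nat.eqb (asg x) i then f x else 0) +
        sumR (filter (fun j => Nat.eqb (asg j) i) l) f)).
    + apply sumR_ext. intros i _. destruct (Nat.eqb (asg x) i); simpl; lra.
    + rewrite sumR_plus, sumR_indicator, IH. destruct (Nat.ltb (asg x) m); simpl; lra.
Qed.

Lemma fold_Rmax_nonneg (l : list R) : 0 <= fold_right Rmax 0 l.
Proof. induction l; simpl; [lra|]. eapply Rle_trans; [exact IHl | apply Rmax_r]. Qed.

Lemma fold_Rmax_ge (l : list R) x : In x l -> x <= fold_right Rmax 0 l.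
Proof.
  induction l as [|y l IH]; simpl; intros Hx; [tauto|].
  destruct Hx as [<- | Hx]; [apply Rmax_l|].
  eapply Rle_trans; [apply IH, Hx | apply Rmax_r].
Qed.

Lemma fold_Rmax_lub (l : list R) B :
  0 <= B -> (forall x, In x l -> x <= B) -> fold_right Rmax 0 l <= B.
Proof.
  induction l; simpl; intros HB Hl; [exact HB|].
  apply Rmax_lub; auto.
Qed.

Lemma fold_Rmax_app_r (l : list R) x :
  0 <= x -> fold_right Rmax 0 (l ++ [x]) = Rmax (fold_right Rmax 0 l) x.
Proof.
  intros Hx. induction l as [|y l IH]; simpl.
  - rewrite Rmax_left, Rmax_right; lra.
  - rewrite IH, Rmax_assoc. reflexivity.
Qed.

Lemma list_argmax (f : nat -> R) l :
  l <> [] -> exists x, In x l /\ forall y, In y l -> f y <= f x.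
Proof.
  induction l as [|a l IH]; intros Hl; [congruence|].
  destruct l as [|b l].
  - exists a. split; [left; reflexivity|]. intros y [<- | []]. lra.
  - destruct IH as [x [Hx Hmax]]; [discriminate|].
    destruct (Rle_dec (f a) (f x)).
    + exists x. split; [right; exact Hx|]. intros y [<- | Hy]; auto.
    + exists a. split; [left; reflexivity|]. intros y [<- | Hy]; [lra|].
      pose proof (Hmax y Hy). lra.
Qed.

Lemma makespan_nonneg n C : 0 <= makespan n C.
Proof. apply fold_Rmax_nonneg. Qed.

Lemma makespan_ge n C j : (j < n)%nat -> C j <= makespan n C.
Proof. intros Hj. apply fold_Rmax_ge, in_map, in_seq. lia. Qed.

Lemma makespan_le n C B :
  0 <= B -> (forall j, (j < n)%nat -> C j <= B) -> makespan n C <= B.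
Proof.
  intros HB HC. apply fold_Rmax_lub; [exact HB|].
  intros x Hx. apply in_map_iff in Hx as [j [<- Hj]]. apply in_seq in Hj.
  apply HC. lia.
Qed.

Lemma firstn_S_nth (l : list nat) k d :
  (k < length l)%nat -> firstn (S k) l = firstn k l ++ [nth k l d].
Proof.
  revert k; induction l as [|x l IH]; simpl; intros k Hk; [lia|].
  destruct k; simpl; [reflexivity|]. rewrite <- IH by lia. reflexivity.
Qed.

Lemma runs_lt r st c p : 0 < p -> runs r st c p -> st < c.
Proof.
  intros Hp [Hle HR]. destruct (Rle_lt_or_eq_dec st c Hle) as [Hlt | <-]; [exact Hlt|].
  rewrite RInt_point in HR. unfold zero in HR; simpl in HR. lra.
Qed.

Lemma RInt_const_R (a b c : R) : RInt (fun _ => c) a b = (b - a) * c.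
Proof. rewrite RInt_const. reflexivity. Qed.

Section SharingProfile.

Variable r : R -> R.
Hypothesis Hr : sharing_profile r.

Lemma sharing_profile_range s : 0 < s -> 0 < r s <= 1.
Proof.
  destruct Hr as (t & e & Ht0 & Hincr & Hunb & He & Hre). intros Hs.
  destruct (Hunb s) as [k Hk].
  assert (Hint : exists k', t k' < s <= t (S k')).
  { induction k as [|k IH]; [lra|].
    destruct (Rle_dec s (t k)) as [Hle | Hgt]; [exact (IH Hle)|].
    exists k. lra. }
  destruct Hint as [k' Hk']. rewrite (Hre k' s Hk'). apply He.
Qed.

Lemma ex_RInt_sharing_profile a b : 0 <= a -> a <= b -> ex_RInt r a b.
Proof.
  destruct Hr as (t & e & Ht0 & Hincr & Hunb & He & Hre). intros Ha Hab.
  assert (Hbreak : forall k, ex_RInt r 0 (t k)).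
  { induction k as [|k IH].
    - rewrite Ht0. apply ex_RInt_point.
    - apply (ex_RInt_Chasles _ _ (t k)); [exact IH|].
      apply (ex_RInt_ext (fun _ => e k)); [|apply ex_RInt_const].
      intros x. pose proof (Hincr k). rewrite Rmin_left, Rmax_right by lra.
      intros Hx. symmetry. apply Hre. lra. }
  destruct (Hunb b) as [k Hk].
  apply (@ex_RInt_Chasles_2 R_CompleteNormedModule r 0); [lra|].
  apply (@ex_RInt_Chasles_1 R_CompleteNormedModule r 0 b (t k)); [lra | apply Hbreak].
Qed.

Lemma RInt_sharing_profile_Chasles a b c :
  0 <= a -> a <= b -> b <= c -> RInt r a b + RInt r b c = RInt r a c.
Proof.
  intros Ha Hab Hbc.
  apply (RInt_Chasles r a b c); apply ex_RInt_sharing_profile; lra.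
Qed.

Lemma RInt_sharing_profile_bounds a b :
  0 <= a -> a <= b -> 0 <= RInt r a b <= b - a.
Proof.
  intros Ha Hab.
  pose proof (ex_RInt_sharing_profile a b Ha Hab) as Hex.
  split.
  - replace 0 with ((b - a) * 0) by ring. rewrite <- RInt_const_R.
    apply RInt_le; [exact Hab | apply ex_RInt_const | exact Hex|].
    intros x Hx. pose proof (sharing_profile_range x). lra.
  - replace (b - a) with ((b - a) * 1) by ring. rewrite <- RInt_const_R.
    apply RInt_le; [exact Hab | exact Hex | apply ex_RInt_const|].
    intros x Hx. pose proof (sharing_profile_range x). lra.
Qed.

Lemma RInt_sharing_profile_ge e0 a b :
  (forall s, 0 < s -> e0 <= r s) -> 0 <= a -> a <= b -> e0 * (b - a) <= RInt r a b.
Proof.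
  intros He0 Ha Hab.
  rewrite Rmult_comm, <- RInt_const_R.
  apply RInt_le; [exact Hab | apply ex_RInt_const | apply ex_RInt_sharing_profile; lra|].
  intros x Hx. apply He0. lra.
Qed.

Lemma RInt_sharing_profile_lipschitz a u v :
  0 <= a -> a <= u -> a <= v -> Rabs (RInt r a v - RInt r a u) <= Rabs (v - u).
Proof.
  intros Ha Hu Hv. destruct (Rle_dec u v) as [Huv | Hvu].
  - rewrite <- (RInt_sharing_profile_Chasles a u v) by lra.
    pose proof (RInt_sharing_profile_bounds u v ltac:(lra) Huv).
    rewrite !Rabs_right by lra. lra.
  - rewrite <- (RInt_sharing_profile_Chasles a v u) by lra.
    pose proof (RInt_sharing_profile_bounds v u ltac:(lra) ltac:(lra)).
    rewrite !Rabs_left1 by lra. lra.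
Qed.

(* Intermediate values of [x |-> RInt r a (Rmax a x)]: clamping at [a] makes it
   continuous on all of R although [r] is only integrable on [[0, +oo)], and the
   rate bound [e0] makes it reach [p] by [a + p / e0]. *)
Lemma sharing_profile_completion e0 a p :
  (forall s, 0 < s -> e0 <= r s) -> 0 < e0 -> 0 <= a -> 0 <= p ->
  exists c, runs r a c p /\ c <= a + p / e0.
Proof.
  intros He0 He0pos Ha Hp.
  set (b := a + p / e0).
  assert (Hab : a <= b) by (unfold b; pose proof (Rdiv_le_0_compat p e0 Hp He0pos); lra).
  set (g := fun x => RInt r a (Rmax a x)).
  assert (Hg : continuity g).
  { intros x0 eps Heps. exists eps. split; [exact Heps|].
    intros y [_ Hy]. simpl in *. unfold R_dist in *. eapply Rle_lt_trans; [|exact Hy].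
    unfold g. eapply Rle_trans; [apply RInt_sharing_profile_lipschitz;
      [exact Ha | apply Rmax_l | apply Rmax_l]|].
    unfold Rmax. destruct Rle_dec, Rle_dec; unfold Rabs; repeat destruct Rcase_abs; lra. }
  assert (Hga : g a = 0).
  { unfold g. rewrite Rmax_left by lra. rewrite RInt_point. reflexivity. }
  assert (Hgb : p <= g b).
  { unfold g. rewrite Rmax_right by lra.
    replace p with (e0 * (b - a)) by (unfold b; field; lra).
    apply RInt_sharing_profile_ge; assumption. }
  destruct (IVT_gen g a b p Hg) as [c [Hc Hgc]].
  - rewrite Hga, Rmin_left, Rmax_right; lra.
  - rewrite Rmin_left, Rmax_right in Hc by lra.
    unfold g in Hgc. rewrite Rmax_right in Hgc by lra.
    exists c. split; [split|]; lra || exact Hgc.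
Qed.

(* Peel off the interval ending last: all others end before it starts. *)
Lemma sumR_RInt_disjoint_le (a b : nat -> R) T l :
  0 <= T -> NoDup l ->
  (forall j, In j l -> 0 <= a j /\ a j < b j /\ b j <= T) ->
  (forall j j', In j l -> In j' l -> j <> j' -> b j <= a j' \/ b j' <= a j) ->
  sumR l (fun j => RInt r (a j) (b j)) <= RInt r 0 T.
Proof.
  remember (length l) as n eqn:Hn. revert l T Hn.
  induction n as [|n IH]; intros l T Hn HT Hnd Hab Hdisj.
  - destruct l; [|discriminate]. simpl.
    apply (RInt_sharing_profile_bounds 0 T); lra.
  - destruct (list_argmax b l) as [x [Hx Hmax]]; [intros ->; discriminate|].
    destruct (in_split x l Hx) as [l1 [l2 ->]].
    destruct (Hab x Hx) as (Hax & Habx & HbxT).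
    assert (Hin : forall y, In y (l1 ++ l2) -> In y (l1 ++ x :: l2)).
    { intros y Hy. apply in_app_or in Hy. apply in_or_app. simpl. tauto. }
    assert (Hbefore : forall y, In y (l1 ++ l2) -> b y <= a x).
    { intros y Hy. assert (Hyx : y <> x) by (intros ->; exact (NoDup_remove_2 _ _ _ Hnd Hy)).
      destruct (Hdisj y x (Hin y Hy) Hx Hyx) as [Hle | Hle]; [exact Hle|].
      pose proof (Hmax y (Hin y Hy)). destruct (Hab y (Hin y Hy)) as (_ & Hlt & _). lra. }
    assert (Hrest : sumR (l1 ++ l2) (fun j => RInt r (a j) (b j)) <= RInt r 0 (a x)).
    { apply IH.
      - rewrite length_app in *. simpl in Hn. lia.
      - exact Hax.
      - exact (NoDup_remove_1 _ _ _ Hnd).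
      - intros y Hy. destruct (Hab y (Hin y Hy)) as (Hay & Haby & _).
        pose proof (Hbefore y Hy). lra.
      - intros y y' Hy Hy'. apply Hdisj; apply Hin; assumption. }
    rewrite sumR_app in *. simpl.
    rewrite <- (RInt_sharing_profile_Chasles 0 (a x) T),
            <- (RInt_sharing_profile_Chasles (a x) (b x) T) by lra.
    pose proof (RInt_sharing_profile_bounds (b x) T ltac:(lra) HbxT). lra.
Qed.

End SharingProfile.

Lemma feasible_job_le m n r p assign St C j :
  (forall i, (i < m)%nat -> sharing_profile (r i)) ->
  feasible m n r p assign St C -> (j < n)%nat -> p j <= C j.
Proof.
  intros Hsp [Hjobs _] Hj. destruct (Hjobs j Hj) as (Ha & HSt & Hle & HR).
  pose proof (RInt_sharing_profile_bounds _ (Hsp _ Ha) (St j) (C j) HSt Hle). lra.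
Qed.

(* On each machine the jobs occupy disjoint windows of [[0, T]]. *)
Lemma feasible_work_le m n r p assign St C T :
  (forall i, (i < m)%nat -> sharing_profile (r i)) ->
  (forall j, (j < n)%nat -> 0 < p j) ->
  feasible m n r p assign St C -> 0 <= T -> (forall j, (j < n)%nat -> C j <= T) ->
  sumR (seq 0 n) p <= sumR (seq 0 m) (fun i => RInt (r i) 0 T).
Proof.
  intros Hsp Hp [Hjobs Hdisj] HT HCT.
  assert (Hall : filter (fun j => Nat.ltb (assign j) m) (seq 0 n) = seq 0 n).
  { apply forallb_filter_id, forallb_forall. intros j Hj. apply in_seq in Hj.
    apply Nat.ltb_lt, (Hjobs j). lia. }
  rewrite <- Hall at 1. rewrite <- sumR_by_machine.
  apply sumR_le. intros i Hi. apply in_seq in Hi.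
  set (on_i := filter (fun j => Nat.eqb (assign j) i) (seq 0 n)).
  assert (Hon_i : forall j, In j on_i -> (j < n)%nat /\ assign j = i).
  { intros j Hj. apply filter_In in Hj as [Hj Ha]. apply in_seq in Hj.
    apply Nat.eqb_eq in Ha. split; [lia | exact Ha]. }
  rewrite (sumR_ext _ p (fun j => RInt (r i) (St j) (C j))).
  - apply sumR_RInt_disjoint_le; [apply Hsp; lia | exact HT | apply NoDup_filter, seq_NoDup | |].
    + intros j Hj. destruct (Hon_i j Hj) as [Hjn <-].
      destruct (Hjobs j Hjn) as (_ & HSt & Hrun).
      pose proof (runs_lt _ _ _ _ (Hp j Hjn) Hrun). pose proof (HCT j Hjn). lra.
    + intros j j' Hj Hj' Hjj'. destruct (Hon_i j Hj), (Hon_i j' Hj').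
      apply Hdisj; auto; congruence.
  - intros j Hj. destruct (Hon_i j Hj) as [Hjn <-].
    destruct (Hjobs j Hjn) as (_ & _ & _ & HR). symmetry. exact HR.
Qed.

Lemma mfinish_nonneg assign C l i : 0 <= mfinish assign C l i.
Proof. apply fold_Rmax_nonneg. Qed.

Section ListScheduling.

Variables (m : nat) (r : nat -> R -> R) (p : nat -> R) (ord : list nat)
  (assign : nat -> nat) (St C : nat -> R).
Hypothesis Hsp : forall i, (i < m)%nat -> sharing_profile (r i).
Hypothesis Hls : ls_ect m r p ord assign St C.

Lemma mfinish_firstn_S k i : (k < length ord)%nat ->
  mfinish assign C (firstn (S k) ord) i =
  if Nat.eqb (assign (nth k ord O)) i then C (nth k ord O)
  else mfinish assign C (firstn k ord) i.
Proof.
  intros Hk. destruct (Hls k Hk) as (_ & HSt & [Hle _] & _).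
  pose proof (mfinish_nonneg assign C (firstn k ord) (assign (nth k ord O))).
  unfold mfinish in *. rewrite (firstn_S_nth ord k O Hk), filter_app. simpl filter.
  destruct (Nat.eqb_spec (assign (nth k ord O)) i) as [<- | Hne].
  - rewrite map_app. simpl map. rewrite fold_Rmax_app_r by lra. apply Rmax_right. lra.
  - rewrite app_nil_r. reflexivity.
Qed.

(* LS-ECT never leaves a machine idle, so by its finish time a machine has
   processed exactly the work assigned to it. *)
Lemma ls_ect_machine_work k i : (k <= length ord)%nat -> (i < m)%nat ->
  RInt (r i) 0 (mfinish assign C (firstn k ord) i) =
  sumR (filter (fun j => Nat.eqb (assign j) i) (firstn k ord)) p.
Proof.
  intros Hk Hi. induction k as [|k IH].
  - exact (RInt_point 0 (r i)).
  - rewrite mfinish_firstn_S by lia. rewrite (firstn_S_nth ord k O), filter_app by lia.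
    set (j := nth k ord O). simpl filter.
    destruct (Hls k ltac:(lia)) as (_ & HSt & [Hle HR] & _). fold j in HSt, Hle, HR.
    destruct (Nat.eqb_spec (assign j) i) as [<- | Hne].
    + rewrite sumR_app, <- IH by lia. simpl.
      pose proof (mfinish_nonneg assign C (firstn k ord) (assign j)).
      rewrite <- (RInt_sharing_profile_Chasles _ (Hsp _ Hi) 0 (St j) (C j)) by lra.
      rewrite HR, HSt. lra.
    + rewrite app_nil_r. apply IH. lia.
Qed.

End ListScheduling.

Lemma le_mul_div_pred_succ m m1 : (1 <= m1)%nat -> (m <= m1 * ((m - 1) / m1 + 1))%nat.
Proof.
  intros Hm1.
  pose proof (Nat.div_mod (m - 1) m1 ltac:(lia)).
  pose proof (Nat.mod_upper_bound (m - 1) m1 ltac:(lia)).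
  nia.
Qed.

Section LsEctBound.

Variables (m m1 : nat) (e0 : R) (r : nat -> R -> R) (p : nat -> R) (ord : list nat)
  (assign : nat -> nat) (St C : nat -> R) (T : R).
Hypotheses (Hm1 : (1 <= m1)%nat) (Hm1m : (m1 <= m)%nat) (He0 : 0 < e0).
Hypothesis Hsp : forall i, (i < m)%nat -> sharing_profile (r i).
Hypothesis Hgood : forall i, (i < m1)%nat -> forall s, 0 < s -> e0 <= r i s.
Hypothesis Hls : ls_ect m r p ord assign St C.
Hypothesis Hp : forall j, In j ord -> 0 <= p j.
Hypothesis HT : 0 <= T.
Hypothesis HpT : forall j, In j ord -> p j <= T.
Hypothesis Hwork : sumR ord p <= sumR (seq 0 m) (fun i => RInt (r i) 0 T).

Lemma ls_ect_le_good_machine k i : (k < length ord)%nat -> (i < m1)%nat ->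
  e0 * C (nth k ord O) <= e0 * mfinish assign C (firstn k ord) i + p (nth k ord O).
Proof.
  intros Hk Hi. set (j := nth k ord O). set (Fi := mfinish assign C (firstn k ord) i).
  destruct (sharing_profile_completion (r i) (Hsp i ltac:(lia)) e0 Fi (p j) (Hgood i Hi) He0
              (mfinish_nonneg _ _ _ _) (Hp j (nth_In _ _ Hk))) as [c [Hrun Hc]].
  destruct (Hls k Hk) as (_ & _ & _ & Hect).
  pose proof (Hect i c ltac:(lia) Hrun) as HCc. fold j in HCc.
  replace (e0 * Fi + p j) with (e0 * (Fi + p j / e0)) by (field; lra).
  apply Rmult_le_compat_l; lra.
Qed.

Lemma ls_ect_good_machines_work k : (k < length ord)%nat ->
  sumR (seq 0 m1) (fun i => RInt (r i) 0 (mfinish assign C (firstn k ord) i)) + p (nth k ord O)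
  <= sumR (seq 0 m1) (fun i => RInt (r i) 0 T) + INR (m - m1) * T.
Proof.
  intros Hk.
  assert (Hdone : sumR (seq 0 m1) (fun i => RInt (r i) 0 (mfinish assign C (firstn k ord) i))
                  <= sumR (firstn k ord) p).
  { rewrite (sumR_ext _ _
      (fun i => sumR (filter (fun j => Nat.eqb (assign j) i) (firstn k ord)) p)).
    - rewrite sumR_by_machine. apply sumR_filter_le.
      intros j Hj. apply Hp. rewrite <- (firstn_skipn k ord). apply in_or_app. left. exact Hj.
    - intros i Hi. apply in_seq in Hi.
      apply (ls_ect_machine_work m r p ord assign St C); auto; lia. }
  assert (Hjob : sumR (firstn k ord) p + p (nth k ord O) <= sumR ord p).
  { pose proof (sumR_firstn_le (S k) ord p Hp) as Hle.
    rewrite (firstn_S_nth ord k O Hk), sumR_app in Hle. simpl in Hle. lra. }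
  assert (Hslow : sumR (seq m1 (m - m1)) (fun i => RInt (r i) 0 T) <= INR (m - m1) * T).
  { replace (INR (m - m1) * T) with (sumR (seq m1 (m - m1)) (fun _ => T))
      by (rewrite sumR_const, length_seq; reflexivity).
    apply sumR_le.
    intros i Hi. apply in_seq in Hi.
    pose proof (RInt_sharing_profile_bounds _ (Hsp i ltac:(lia)) 0 T (Rle_refl 0) HT). lra. }
  replace m with (m1 + (m - m1))%nat in Hwork by lia.
  rewrite seq_app, sumR_app in Hwork. simpl in Hwork. lra.
Qed.

(* Averaging [ls_ect_le_good_machine] over the good machines, each of which
   has done at least [e0 (F_i - T)] more work than in the optimal schedule. *)
Lemma ls_ect_le_busy k : (k < length ord)%nat ->
  (forall i, (i < m1)%nat -> T < mfinish assign C (firstn k ord) i) ->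
  INR m1 * (e0 * C (nth k ord O)) <= INR m1 * (e0 * T) + (INR m - 1) * T.
Proof.
  intros Hk Hbusy. set (j := nth k ord O).
  assert (Hpoint : forall i, In i (seq 0 m1) ->
    RInt (r i) 0 T + (e0 * C j - e0 * T - p j) <= RInt (r i) 0 (mfinish assign C (firstn k ord) i)).
  { intros i Hi. apply in_seq in Hi.
    pose proof (Hbusy i ltac:(lia)) as HFi.
    pose proof (ls_ect_le_good_machine k i Hk ltac:(lia)) as HCj.
    pose proof (RInt_sharing_profile_ge _ (Hsp i ltac:(lia)) e0 T
                  (mfinish assign C (firstn k ord) i) (Hgood i ltac:(lia)) HT ltac:(lra)).
    rewrite <- (RInt_sharing_profile_Chasles _ (Hsp i ltac:(lia)) 0 T
                  (mfinish assign C (firstn k ord) i)) by lra.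
    fold j in HCj. lra. }
  apply sumR_le in Hpoint. rewrite sumR_plus, sumR_const, length_seq in Hpoint.
  pose proof (ls_ect_good_machines_work k Hk) as Hwork_k. fold j in Hwork_k.
  rewrite minus_INR in Hwork_k by exact Hm1m.
  assert (Hm1R : 1 <= INR m1) by (apply (le_INR 1); exact Hm1).
  assert ((INR m1 - 1) * p j <= (INR m1 - 1) * T).
  { apply Rmult_le_compat_l; [lra | apply HpT, nth_In, Hk]. }
  lra.
Qed.

Lemma ls_ect_completion_le k : (k < length ord)%nat ->
  C (nth k ord O) <= (1 + / e0 * (INR ((m - 1) / m1) + 1)) * T.
Proof.
  intros Hk. set (j := nth k ord O). set (Q := INR ((m - 1) / m1)).
  assert (HQ : 0 <= Q) by apply pos_INR.
  assert (HpjT : p j <= T) by apply HpT, nth_In, Hk.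
  assert (Hsuff : e0 * C j <= e0 * T + (Q + 1) * T).
  { destruct (list_argmax (fun i => - mfinish assign C (firstn k ord) i) (seq 0 m1))
      as [i0 [Hi0 Hmin]]; [destruct m1; [lia | discriminate]|].
    apply in_seq in Hi0.
    pose proof (ls_ect_le_good_machine k i0 Hk ltac:(lia)) as Hi0C. fold j in Hi0C.
    destruct (Rle_dec (mfinish assign C (firstn k ord) i0) T) as [Hidle | Hbusy].
    - assert (0 <= Q * T) by (apply Rmult_le_pos; assumption).
      assert (e0 * mfinish assign C (firstn k ord) i0 <= e0 * T) by (apply Rmult_le_compat_l; lra).
      lra.
    - assert (Hall : forall i, (i < m1)%nat -> T < mfinish assign C (firstn k ord) i).
      { intros i Hi. assert (In i (seq 0 m1)) as Hin by (apply in_seq; lia).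
        pose proof (Hmin i Hin). lra. }
      pose proof (ls_ect_le_busy k Hk Hall) as Hbound. fold j in Hbound.
      assert (HmQ : INR m <= INR m1 * (Q + 1)).
      { unfold Q. rewrite <- S_INR, <- mult_INR. apply le_INR.
        rewrite <- Nat.add_1_r. apply le_mul_div_pred_succ, Hm1. }
      assert (Hm1R : 0 < INR m1) by (apply lt_0_INR; lia).
      apply (Rmult_le_reg_l (INR m1)); [exact Hm1R|].
      assert (INR m * T <= INR m1 * (Q + 1) * T) by (apply Rmult_le_compat_r; assumption).
      lra. }
  replace (C j) with (/ e0 * (e0 * C j)) by (field; lra).
  replace ((1 + / e0 * (Q + 1)) * T) with (/ e0 * (e0 * T + (Q + 1) * T)) by (field; lra).
  apply Rmult_le_compat_l; [apply Rlt_le, Rinv_0_lt_compat, He0 | exact Hsuff].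
Qed.

End LsEctBound.

Theorem theorem3 :
  forall (m m1 n : nat) (e0 : R) (r : nat -> R -> R) (p : nat -> R)
    (ord : list nat) (assign : nat -> nat) (S C : nat -> R),
    (1 <= m1)%nat -> (m1 <= m)%nat ->
    0 < e0 -> e0 <= 1 ->
    (forall i, (i < m)%nat -> sharing_profile (r i)) ->
    (forall i, (i < m1)%nat -> forall s, 0 < s -> e0 <= r i s) ->
    (forall j, (j < n)%nat -> 0 < p j) ->
    Permutation ord (seq 0 n) ->
    ls_ect m r p ord assign S C ->
    forall (assign' : nat -> nat) (S' C' : nat -> R),
      feasible m n r p assign' S' C' ->
      makespan n C
        <= (1 + / e0 * (INR ((m - 1) / m1) + 1)) * makespan n C'.
Proof.
  intros m m1 n e0 r p ord assign S C Hm1 Hm1m He0 _ Hsp Hgood Hp Hperm Hls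
    assign' S' C' Hfeas.
  set (T := makespan n C').
  assert (HT : 0 <= T) by apply makespan_nonneg.
  assert (Hord : forall j, In j ord <-> (j < n)%nat).
  { intros j. split.
    - intros Hj. apply (Permutation_in _ Hperm) in Hj. apply in_seq in Hj. lia.
    - intros Hj. apply (Permutation_in _ (Permutation_sym Hperm)), in_seq. lia. }
  assert (Hcompletion : forall k, (k < length ord)%nat ->
            C (nth k ord O) <= (1 + / e0 * (INR ((m - 1) / m1) + 1)) * T).
  { apply (ls_ect_completion_le m m1 e0 r p ord assign S C T); try assumption.
    - intros j Hj. apply Rlt_le, Hp, Hord, Hj.
    - intros j Hj%Hord. eapply Rle_trans;
        [apply (feasible_job_le m n r p assign' S' C'); assumption | apply makespan_ge, Hj].
    - rewrite (sumR_perm _ _ p Hperm).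
      apply (feasible_work_le m n r p assign' S' C'); try assumption.
      intros j. apply makespan_ge. }
  apply makespan_le.
  - apply Rmult_le_pos; [|exact HT].
    pose proof (pos_INR ((m - 1) / m1)). pose proof (Rinv_0_lt_compat e0 He0). nra.
  - intros j Hj%Hord. destruct (In_nth ord j O Hj) as [k [Hk <-]]. apply Hcompletion, Hk.
Qed.
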